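(* In any additive poset, any set of pairwise independent nonzero elements is linearly independent over $\mathbb{Z}/2\mathbb{Z}$.
   Context: An additive poset is a pair $(A,\le)$ where $A$ is an abelian group and $\le$ is a partial order on $A$ such that for all $a,b,c\in A$: $(\ast)$ if $b\le a$ and $c\le a$ then $b+c\le a$; $(\ast\ast)$ if $a\le b$ and $a\le c$ then $a\le a+b+c$. Every element satisfies $a+a=0$, so $A$ is a $\mathbb{Z}/2\mathbb{Z}$-vector space. Elements $a,b\in A$ are called independent if $a\le a+b$; this relation is symmetric. *)

From HB Require Import structures.
From mathcomp Require Import all_boot all_order all_algebra.
Set Implicit Arguments. Unset Strict Implicit. Unset Printing Implicit Defensive.
Import GRing.Theory.
Local Open Scope ring_scope.

Definition additive_poset (A : zmodType) (le : A -> A -> Prop) : Prop :=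
  [/\ (forall a, le a a),
      (forall a b, le a b -> le b a -> a = b),
      (forall a b c, le a b -> le b c -> le a c),
      (forall a b c, le b a -> le c a -> le (b + c) a) &
      (forall a b c, le a b -> le a c -> le a (a + b + c))].

Definition independent (A : zmodType) (le : A -> A -> Prop) (a b : A) : Prop :=
  le a (a + b).

(* Linear independence over Z/2Z of a (possibly infinite) set S : every
   nonempty finite family of pairwise distinct elements of S has nonzero sum
   (over F_2 the only nontrivial coefficients are 1). *)
Definition lin_indep_Z2 (A : zmodType) (S : A -> Prop) : Prop :=
  forall s : seq A, uniq s -> s != [::] -> (forall x, x \in s -> S x) ->
    \sum_(x <- s) x != 0.

(* Every element has order 2, so [0 = a + a <= a] by the first axiom: 0 is the
   least element.  By the second axiom, the set of elements independent of [a]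
   is closed under sums.  Hence if [a] is independent of [b_1, ..., b_n] and
   [a + b_1 + ... + b_n = 0], then [a <= a + (b_1 + ... + b_n) = 0], so [a = 0]. *)

From HB Require Import structures.
From mathcomp Require Import all_boot all_order all_algebra.
Import GRing.Theory.
Set Implicit Arguments.
Unset Strict Implicit.
Unset Printing Implicit Defensive.

Local Open Scope ring_scope.

Section AdditivePoset.

Variables (A : zmodType) (le : A -> A -> Prop).
Hypothesis hA : additive_poset le.

Let le_refl (a : A) : le a a. Proof. by case: hA. Qed.
Let le_anti (a b : A) : le a b -> le b a -> a = b.
Proof. by case: hA => _ anti _ _ _; apply: anti. Qed.
Let addl_le (a b c : A) : le b a -> le c a -> le (b + c) a.
Proof. by case: hA => _ _ _ add_le _; apply: add_le. Qed.
Let le_addr (a b c : A) : le a b -> le a c -> le a (a + b + c).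
Proof. by case: hA => _ _ _ _ le_add; apply: le_add. Qed.

Lemma addpp (a : A) : a + a = 0.
Proof.
have le2a : le (a + a) a by apply: addl_le.
have le3a : le (a + a + a) a by apply: addl_le.
have a_le3a : le a (a + a + a) by apply: le_addr.
by apply: (addIr a); rewrite add0r; apply: le_anti.
Qed.

Lemma le0x (a : A) : le 0 a.
Proof. by rewrite -(addpp a); apply: addl_le. Qed.

Lemma lex0 (a : A) : le a 0 -> a = 0.
Proof. by move=> /le_anti; apply; apply: le0x. Qed.

Lemma independent_sum (a : A) (t : seq A) :
  (forall b, b \in t -> independent le a b) -> independent le a (\sum_(b <- t) b).
Proof.
rewrite /independent; elim: t => [|b t IHt] indep_t.
  by rewrite big_nil addr0.
have ab : le a (a + b) by apply: indep_t; rewrite mem_head.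
have at_ : le a (a + \sum_(c <- t) c).
  by apply: IHt => c ct; apply: indep_t; rewrite inE ct orbT.
have := le_addr ab at_.
by rewrite big_cons (addrA a a b) addpp add0r addrCA.
Qed.

End AdditivePoset.

Theorem lemma4p2 (A : zmodType) (le : A -> A -> Prop)
  (hA : additive_poset le) (S : A -> Prop)
  (hnz : forall a, S a -> a <> 0)
  (hind : forall a b, S a -> S b -> a <> b -> independent le a b) :
  lin_indep_Z2 S.
Proof.
move=> [//|a t] /= /andP[a_t _] _ S_at.
have Sa : S a by apply: S_at; rewrite mem_head.
have indep_a : independent le a (\sum_(b <- t) b).
  apply: (independent_sum hA) => b bt; apply: hind => //.
    by apply: S_at; rewrite inE bt orbT.
  by move=> ab; rewrite ab bt in a_t.
rewrite big_cons; apply/eqP => sum0.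
by apply: (hnz a Sa); apply: (lex0 hA); rewrite /independent sum0 in indep_a.
Qed.
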